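(* If $M$ and $N$ are transversal matroids on disjoint finite sets, then the free product $M\mathbin{\Box} N$ is a transversal matroid.
   Context: For a matroid $M$ on $S$ write $\rho_M$ for rank, $\rho(M)=\rho_M(S)$, $\nu_M(A)=|A|-\rho_M(A)$, $\lambda_M(A)=\rho(M)-\rho_M(A)$. For matroids $M$ on $S$ and $N$ on $T$ with $S\cap T=\emptyset$, the free product $M\mathbin{\Box} N$ is the matroid on $S\cup T$ whose independent sets are those $A$ with $A\cap S$ independent in $M$ and $\lambda_M(A\cap S)\geq\nu_N(A\cap T)$. Given an indexed family $\{A_i: i\in I\}$ of subsets of a set $S$ (repetitions allowed), a partial transversal is a set $A\subseteq S$ admitting an injection $f:A\to I$ with $a\in A_{f(a)}$ for all $a\in A$; a transversal matroid is a matroid whose independent sets are exactly the partial transversals of some such family. *)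

From mathcomp Require Import all_boot.
Set Implicit Arguments. Unset Strict Implicit. Unset Printing Implicit Defensive.

(* A matroid on the finite ground set T (the whole finType T), given by
   its independent sets. *)
Record matroid (T : finType) := Matroid {
  indep : pred {set T};
  indep0 : indep set0;
  indep_sub : forall A B : {set T}, A \subset B -> indep B -> indep A;
  indep_aug : forall A B : {set T}, indep A -> indep B -> #|A| < #|B| ->
      exists2 x, x \in B :\: A & indep (x |: A)
}.

Definition mrank (T : finType) (M : matroid T) (A : {set T}) : nat :=
  \max_(B : {set T} | (B \subset A) && indep M B) #|B|.

Definition mrk (T : finType) (M : matroid T) : nat := mrank M [set: T].

Definition nullity (T : finType) (M : matroid T) (A : {set T}) : nat :=
  #|A| - mrank M A.

Definition corank (T : finType) (M : matroid T) (A : {set T}) : nat :=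
  mrk M - mrank M A.

Definition lpart (S T : finType) (A : {set S + T}) : {set S} :=
  [set x | inl x \in A].
Definition rpart (S T : finType) (A : {set S + T}) : {set T} :=
  [set y | inr y \in A].

Definition free_product_indep (S T : finType) (M : matroid S) (N : matroid T)
  (A : {set S + T}) : Prop :=
  indep M (lpart A) /\ nullity N (rpart A) <= corank M (lpart A).

Definition partial_transversal (T I : finType) (Af : I -> {set T})
  (A : {set T}) : Prop :=
  exists f : T -> I, {in A &, injective f} /\ forall a, a \in A -> a \in Af (f a).

Definition transversal_indep (T : finType) (P : {set T} -> Prop) : Prop :=
  exists (I : finType) (Af : I -> {set T}),
    forall A : {set T}, P A <-> partial_transversal Af A.

Definition transversal_matroid (T : finType) (M : matroid T) : Prop :=
  transversal_indep (fun A => indep M A).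

From mathcomp Require Import all_boot zify.
Set Implicit Arguments. Unset Strict Implicit. Unset Printing Implicit Defensive.

(* Take presentations (A_i)_{i : IM} of M and (A'_k)_{k : IN} of N, and a basis B of M
   matched onto K ⊆ IM, so that |K| = r(M).  As B is a partial transversal of maximum
   size, an alternating-path argument rematches every partial transversal of (A_i) into K.
   Then M □ N is presented by the sets A_i ∪ T (i ∈ K) and A'_k (k : IN).  In a matching of
   X, the set X ∩ S and the elements of X ∩ T matched into K use distinct indices of K, so
   at most r(M) - |X ∩ S| elements of X ∩ T are matched into K, and the others are
   independent in N: this gives ν_N(X ∩ T) ≤ λ_M(X ∩ S).  Conversely, match X ∩ S into K,
   match a basis of X ∩ T in N, and send the ν_N(X ∩ T) ≤ |K| - |X ∩ S| remaining elements
   of X ∩ T to the unused indices of K. *)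

Lemma indep_card_le_mrank (S : finType) (M : matroid S) (A C : {set S}) :
  A \subset C -> indep M A -> #|A| <= mrank M C.
Proof.
move=> AC indepA; rewrite /mrank.
apply: (@leq_bigmax_cond _ (fun B : {set S} => (B \subset C) && indep M B)
  (fun B : {set S} => #|B|)).
by rewrite AC.
Qed.

Lemma mrank_basis (S : finType) (M : matroid S) (C : {set S}) :
  exists B : {set S}, [/\ B \subset C, indep M B & #|B| = mrank M C].
Proof.
have P0 : (set0 \subset C) && indep M set0 by rewrite sub0set indep0.
rewrite /mrank (@bigmax_eq_arg _ set0 (fun B : {set S} => (B \subset C) && indep M B)
  (fun B : {set S} => #|B|) P0).
by case: arg_maxnP => // B /andP[BC indepB] _; exists B.
Qed.

Lemma mrank_indep (S : finType) (M : matroid S) (A : {set S}) :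
  indep M A -> mrank M A = #|A|.
Proof.
move=> indepA; apply/eqP; rewrite eqn_leq indep_card_le_mrank // andbT.
by have [B [BA _ <-]] := mrank_basis M A; apply: subset_leq_card.
Qed.

Lemma mem_lpart (S T : finType) (X : {set S + T}) x : (x \in lpart X) = (inl x \in X).
Proof. by rewrite inE. Qed.

Lemma mem_rpart (S T : finType) (X : {set S + T}) y : (y \in rpart X) = (inr y \in X).
Proof. by rewrite inE. Qed.

Lemma card_lpart_rpart (S T : finType) (X : {set S + T}) :
  #|X| = #|lpart X| + #|rpart X|.
Proof.
have inl_inj : injective (@inl S T) by move=> ? ? [].
have inr_inj : injective (@inr S T) by move=> ? ? [].
have {1}-> : X = inl @: lpart X :|: inr @: rpart X.
  apply/setP => -[x|y]; rewrite in_setU.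
  - rewrite mem_imset // mem_lpart; case: imsetP => [[? _ //]|_]; by rewrite orbF.
  - rewrite (mem_imset _ _ inr_inj) mem_rpart; by case: imsetP => [[? _ //]|].
rewrite cardsU !card_imset // -[RHS]subn0; congr (_ - _); apply/eqP; rewrite cards_eq0.
by apply/eqP/setP => z; rewrite !inE; apply/andP => -[/imsetP[x _ ->] /imsetP[]].
Qed.

Section Injections.
Variables (U W : finType).

Lemma in_inj_patch (X1 X2 : {set U}) (g1 g2 : U -> W) :
  {in X1 &, injective g1} -> {in X2 :\: X1 &, injective g2} ->
  {in X1 & X2 :\: X1, forall a b, g1 a != g2 b} ->
  {in X1 :|: X2 &, injective (fun u => if u \in X1 then g1 u else g2 u)}.
Proof.
move=> g1_inj g2_inj g1g2 a b.
have inD u : u \in X1 :|: X2 -> u \notin X1 -> u \in X2 :\: X1.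
  by rewrite in_setD in_setU => /orP[->|-> ->].
move=> aX bX; have [aX1|/(inD a aX) aD] := boolP (a \in X1);
  have [bX1|/(inD b bX) bD] := boolP (b \in X1) => E.
- exact: g1_inj.
- by move: (g1g2 a b aX1 bD); rewrite E eqxx.
- by move: (g1g2 b a bX1 aD); rewrite E eqxx.
- exact: g2_inj.
Qed.

Lemma card_leq_inj_opt (V : finType) (A : {set U}) (B : {set V}) :
  #|A| <= #|B| -> exists2 h : U -> option V, {in A &, injective h} &
    {in A, forall a, exists2 b, h a = Some b & b \in B}.
Proof.
move=> AB; pose s := [seq Some b | b <- enum B].
have idx_lt a : a \in A -> index a (enum A) < size s.
  by move=> aA; rewrite size_map -cardE (leq_trans _ AB) // cardE index_mem mem_enum.
exists (fun a => nth None s (index a (enum A))).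
  move=> a1 a2 a1A a2A /eqP; rewrite nth_uniq ?idx_lt //; last first.
    by rewrite map_inj_uniq ?enum_uniq // => ? ? [].
  by move/eqP; apply: (index_inj a1); rewrite mem_enum.
move=> a aA; have /mapP[b] := mem_nth None (idx_lt a aA).
by rewrite mem_enum; exists b.
Qed.

End Injections.

Lemma in_inj_sum (S T W : finType) (X : {set S + T}) (g : S -> W) (k : T -> W) :
  {in lpart X &, injective g} -> {in rpart X &, injective k} ->
  {in lpart X & rpart X, forall x y, g x != k y} ->
  {in X &, injective (fun z => match z with inl x => g x | inr y => k y end)}.
Proof.
move=> g_inj k_inj gk [x1|y1] [x2|y2]; rewrite -?mem_lpart -?mem_rpart => z1X z2X E.
- by rewrite (g_inj x1 x2).
- by move: (gk x1 y2 z1X z2X); rewrite E eqxx.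
- by move: (gk x2 y1 z2X z1X); rewrite E eqxx.
- by rewrite (k_inj y1 y2).
Qed.

Section Matchings.
Variables (U I : finType) (Af : I -> {set U}).

Definition matching (A : {set U}) (g : U -> I) :=
  {in A &, injective g} /\ {in A, forall a, a \in Af (g a)}.

Lemma matching_sub (A A' : {set U}) (g : U -> I) :
  A' \subset A -> matching A g -> matching A' g.
Proof.
move=> /subsetP A'A [g_inj g_mem].
by split=> [a b /A'A aA /A'A bA|a /A'A]; [apply: g_inj | apply: g_mem].
Qed.

Lemma matching_patch (A1 A2 : {set U}) (g1 g2 : U -> I) :
  matching A1 g1 -> matching A2 g2 ->
  {in A1 & A2 :\: A1, forall a b, g1 a != g2 b} ->
  matching (A1 :|: A2) (fun u => if u \in A1 then g1 u else g2 u).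
Proof.
move=> [g1_inj g1_mem] [g2_inj g2_mem] g1g2; split.
  by apply: in_inj_patch => // a b /setDP[aA2 _] /setDP[bA2 _]; apply: g2_inj.
move=> u; case: ifP => [uA1 _|uA1]; first exact: g1_mem.
by rewrite in_setU uA1 => /g2_mem.
Qed.

(* [partial_transversal] asks for a total map [U -> I] even when [A] is empty, hence the
   default [d]. *)
Lemma partial_transversal_opt (d : U -> I) (A : {set U}) (g : U -> option I) :
  {in A &, injective g} -> {in A, forall a, exists2 i, g a = Some i & a \in Af i} ->
  partial_transversal Af A.
Proof.
move=> g_inj g_mem; exists (fun a => odflt (d a) (g a)); split.
  move=> a b aA bA; have [i ga _] := g_mem a aA; have [j gb _] := g_mem b bA.
  by rewrite ga gb /= => eij; apply: g_inj; rewrite // ga gb eij.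
by move=> a aA; have [i -> ai] := g_mem a aA.
Qed.

Section MaximumMatching.
Variables (B : {set U}) (fB : U -> I).
Hypotheses (matching_B : matching B fB)
  (max_B : forall A g, matching A g -> #|A| <= #|B|).
Local Notation K := (fB @: B).

Section AlternatingPath.
Variables (X : {set U}) (g0 : U -> I) (k0 : I).
Hypotheses (matching_g0 : matching X g0) (k0_notin_K : k0 \notin K).

(* [x |: V] is the vertex set of an alternating path from an element that [g0] matches to
   [k0]: [g0] maps it onto [k0] and the [fB]-indices of [V]. *)
Lemma alternating_path_ends_in_B (V : {set U}) x :
  x \in X :\: V -> V \subset B -> V \subset X ->
  g0 @: (x |: V) = k0 |: fB @: V -> x \in B.
Proof.
move=> /setDP[xX xV] VB VX path_img; apply: contraT => xB.
(* Otherwise [x |: B] would be matched, using [g0] on the path and [fB] on the rest of [B]. *)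
have [[fB_inj _] [g0_inj _]] := (matching_B, matching_g0).
have : matching (x |: V :|: B) (fun u => if u \in x |: V then g0 u else fB u).
  apply: matching_patch => //.
    by apply: matching_sub matching_g0; rewrite subUset sub1set xX.
  move=> a b aV /setDP[bB bV]; apply/eqP => E.
  have : g0 a \in k0 |: fB @: V by rewrite -path_img imset_f.
  rewrite E in_setU1 => /orP[/eqP fBk0|/imsetP[v vV /fB_inj]].
    by move: k0_notin_K; rewrite -fBk0 imset_f.
  move=> /(_ bB (subsetP VB v vV)) bv.
  by move: bV; rewrite bv in_setU1 vV orbT.
by move/max_B; rewrite -setUA (setUidPr VB) cardsU1 xB ltnn.
Qed.

Lemma alternating_path_reroute n (V : {set U}) x :
  #|B :\: V| <= n -> x \in X :\: V -> V \subset B -> V \subset X ->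
  g0 @: (x |: V) = k0 |: fB @: V ->
  exists2 g, matching X g &
    #|[set y in X | g y \notin K]| < #|[set y in X | g0 y \notin K]|.
Proof.
elim: n V x => [|n IH] V x card_BV xXV VB VX path_img;
  have xB := alternating_path_ends_in_B xXV VB VX path_img;
  move/setDP: xXV => [xX xV];
  rewrite (cardsD1 x (B :\: V)) in_setD xV xB // add1n ltnS in card_BV.
have xVB : x |: V \subset B by rewrite subUset sub1set xB.
have xVX : x |: V \subset X by rewrite subUset sub1set xX.
have [[fB_inj _] [g0_inj _]] := (matching_B, matching_g0).
(* Either [g0] uses [fB x] at some [x'] off the path, which extends the path, or the
   elements of the path can all be switched to their [fB]-indices. *)
have [/imsetP[x' /setDP[x'X x'xV] fBx] | fBx_free] :=
  boolP (fB x \in g0 @: (X :\: (x |: V))).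
  apply: (IH (x |: V) x') => //; first by rewrite setUC -setDDl.
  - by rewrite in_setD x'xV x'X.
  - by rewrite imsetU1 path_img -fBx imsetU1 setUCA.
exists (fun u => if u \in x |: V then fB u else g0 u).
  rewrite -(setUidPr xVX); apply: matching_patch => //; first exact: matching_sub matching_B.
  move=> a b /setU1P[->|aV] /setDP[bX bxV].
    by apply: contraNneq fBx_free => ->; rewrite imset_f // in_setD bxV.
  have : fB a \in g0 @: (x |: V) by rewrite path_img setU1r ?imset_f.
  case/imsetP=> c cxV ->; apply: contraNneq bxV => /g0_inj <- //.
  exact: (subsetP xVX).
have : k0 \in g0 @: (x |: V) by rewrite path_img setU11.
case/imsetP=> y1 y1xV k0y1; have y1X := subsetP xVX y1 y1xV.
rewrite (cardsD1 y1 [set y in X | g0 y \notin K]) inE y1X -k0y1 k0_notin_K ltnS.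
apply/subset_leq_card/subsetP => y; rewrite !inE; case: ifP => [yxV|yxV] /andP[yX].
  by rewrite imset_f // (subsetP xVB) // !inE.
by move=> ->; rewrite yX !andbT; apply: contraFneq yxV => ->; rewrite -in_setU1.
Qed.

End AlternatingPath.

Lemma matching_into_max_indices (X : {set U}) (g0 : U -> I) :
  matching X g0 -> exists2 g, matching X g & {in X, forall y, g y \in K}.
Proof.
have [n] := ubnP #|[set y in X | g0 y \notin K]|.
elim: n g0 => // n IH g0 lt_out matching_g0.
have [out0|[y0]] := set_0Vmem [set y in X | g0 y \notin K].
  exists g0 => // y yX; apply: contraT => yK.
  by have := in_set0 y; rewrite -out0 inE yX yK.
rewrite inE => /andP[y0X y0K].
have [||||g matching_g lt_g] :=
  alternating_path_reroute matching_g0 y0K (leqnn #|B :\: set0|) (x := y0).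
- by rewrite setD0.
- exact: sub0set.
- exact: sub0set.
- by rewrite setU0 imset0 imset_set1 setU0.
exact: IH (leq_trans lt_g _) matching_g.
Qed.

End MaximumMatching.
End Matchings.

Section FreeProduct.
Variables (S T IM IN : finType) (M : matroid S) (N : matroid T).
Variables (AM : IM -> {set S}) (AN : IN -> {set T}) (K : {set IM}).
Hypotheses (presM : forall A, indep M A <-> partial_transversal AM A)
  (presN : forall A, indep N A <-> partial_transversal AN A)
  (card_K : #|K| = mrk M)
  (indep_into_K : forall P, indep M P ->
     exists2 g, matching AM P g & {in P, forall x, g x \in K}).

Definition free_product_family (j : IM + IN) : {set S + T} :=
  [set z | match j, z with
           | inl i, inl x => (i \in K) && (x \in AM i)
           | inl i, inr _ => i \in K
           | inr _, inl _ => false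
           | inr k, inr y => y \in AN k
           end].

Lemma free_product_indep_transversal (X : {set S + T}) :
  free_product_indep M N X -> partial_transversal free_product_family X.
Proof.
case; set P := lpart X; set Q := rpart X => indepP null_le.
have [f1 [f1_inj f1_mem] f1_K] := indep_into_K indepP.
have [Q' [Q'Q indepQ' card_Q']] := mrank_basis N Q.
have [f2 [f2_inj f2_mem]] := (presN Q').1 indepQ'.
have f1P_K : f1 @: P \subset K by apply/subsetP => _ /imsetP[x xP ->]; apply: f1_K.
have card_free : #|Q :\: Q'| <= #|K :\: f1 @: P|.
  move: null_le; rewrite /nullity /corank (mrank_indep indepP) -card_Q' -card_K.
  by rewrite !cardsD (setIidPr Q'Q) (setIidPr f1P_K) card_in_imset.
have [h h_inj h_free] := card_leq_inj_opt card_free.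
pose k y := if y \in Q' then Some (inr (f2 y)) else omap inl (h y).
apply: (partial_transversal_opt
  (fun z => match z with inl x => inl (f1 x) | inr y => inr (f2 y) end)
  (g := fun z => match z with inl x => Some (inl (f1 x)) | inr y => k y end)).
- apply: in_inj_sum.
  + by move=> x1 x2 x1P x2P [] /f1_inj ->.
  + rewrite -[rpart X](setUidPr Q'Q); apply: in_inj_patch.
    * by move=> y1 y2 y1Q' y2Q' [] /f2_inj ->.
    * move=> y1 y2 y1Q y2Q; have [i1 e1 _] := h_free y1 y1Q; have [i2 e2 _] := h_free y2 y2Q.
      by rewrite e1 e2 => -[ei]; apply: h_inj; rewrite // e1 e2 ei.
    * by move=> y1 y2 _ /h_free[i ->].
  + move=> x y xP yQ; rewrite /k; case: ifPn => // yQ'.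
    have yQQ' : y \in Q :\: Q' by rewrite in_setD yQ' yQ.
    have [i -> /setDP[_ if1]] := h_free y yQQ'.
    by apply: contraNneq if1 => -[<-]; apply: imset_f.
- move=> [x|y] /=; rewrite -?mem_lpart -?mem_rpart => zX.
    by exists (inl (f1 x)); rewrite // inE f1_K ?f1_mem.
  rewrite /k; case: ifPn => yQ'; first by exists (inr (f2 y)); rewrite // inE f2_mem.
  have yQQ' : y \in Q :\: Q' by rewrite in_setD yQ' zX.
  by have [i -> /setDP[iK _]] := h_free y yQQ'; exists (inl i); rewrite // inE.
Qed.

Lemma free_product_family_inl x j :
  inl x \in free_product_family j -> exists2 i, j = inl i & (i \in K) && (x \in AM i).
Proof. by case: j => [i|k]; rewrite inE // => ?; exists i. Qed.

Lemma free_product_family_inr y j :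
  inr y \in free_product_family j -> j \notin [set inl i | i in K] ->
  exists2 k, j = inr k & y \in AN k.
Proof. by case: j => [i|k]; rewrite inE => yj; [rewrite imset_f | exists k]. Qed.

Section TransversalToIndep.
Variables (X : {set S + T}) (F : S + T -> IM + IN).
Hypothesis matching_F : matching free_product_family X F.

Definition matched_into_K := [set z in X | F z \in [set inl i | i in K]].

Lemma mem_matched_into_K z :
  (z \in matched_into_K) = (z \in X) && (F z \in [set inl i | i in K]).
Proof. by rewrite in_set. Qed.

Lemma card_matched_into_K : #|matched_into_K| <= #|K|.
Proof.
have inl_inj : injective (@inl IM IN) by move=> ? ? [].
have [F_inj _] := matching_F.
rewrite -(card_imset _ inl_inj) -(card_in_imset (f := F)); last first.
  by move=> a b; rewrite !mem_matched_into_K => /andP[aX _] /andP[bX _]; apply: F_inj.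
apply/subset_leq_card/subsetP => j /imsetP[z].
by rewrite mem_matched_into_K => /andP[_ Fz] ->.
Qed.

Lemma lpart_matched_into_K : lpart matched_into_K = lpart X.
Proof.
apply/setP => x; rewrite !mem_lpart mem_matched_into_K; apply/andb_idr.
by case/matching_F.2/free_product_family_inl=> i -> /andP[iK _]; apply: imset_f.
Qed.

Lemma rpart_matched_into_K : rpart matched_into_K \subset rpart X.
Proof. by apply/subsetP => y; rewrite !mem_rpart mem_matched_into_K => /andP[]. Qed.

Lemma indep_lpart_matched : indep M (lpart X).
Proof.
have [F_inj F_mem] := matching_F.
have F_inl x : x \in lpart X -> exists2 i, F (inl x) = inl i & x \in AM i.
  by rewrite mem_lpart => /F_mem/free_product_family_inl[i -> /andP[_ xi]]; exists i.
have [dM _] := (presM set0).1 (indep0 M).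
apply/presM/(partial_transversal_opt dM
  (g := fun x => if F (inl x) is inl i then Some i else None)).
  move=> x1 x2 x1X x2X; have [i1 e1 _] := F_inl x1 x1X; have [i2 e2 _] := F_inl x2 x2X.
  rewrite e1 e2 => -[ei]; suff : inl x1 = inl x2 :> S + T by case.
  by apply: F_inj; rewrite -?mem_lpart // e1 e2 ei.
by move=> x /F_inl[i -> xi]; exists i.
Qed.

Lemma indep_rpart_matched_outside_K : indep N (rpart X :\: rpart matched_into_K).
Proof.
have [F_inj F_mem] := matching_F.
have F_inr y : y \in rpart X :\: rpart matched_into_K ->
    exists2 k, F (inr y) = inr k & y \in AN k.
  rewrite in_setD !mem_rpart mem_matched_into_K => /andP[yK yX].
  by apply: free_product_family_inr (F_mem _ yX) _; rewrite yX in yK.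
have [dN _] := (presN set0).1 (indep0 N).
apply/presN/(partial_transversal_opt dN
  (g := fun y => if F (inr y) is inr k then Some k else None)).
  move=> y1 y2 y1X y2X; have [k1 e1 _] := F_inr y1 y1X; have [k2 e2 _] := F_inr y2 y2X.
  rewrite e1 e2 => -[ek]; suff : inr y1 = inr y2 :> S + T by case.
  by apply: F_inj; rewrite ?e1 ?e2 ?ek // -mem_rpart; [case/setDP: y1X | case/setDP: y2X].
by move=> y /F_inr[k -> yk]; exists k.
Qed.

End TransversalToIndep.

Lemma transversal_free_product_indep (X : {set S + T}) :
  partial_transversal free_product_family X -> free_product_indep M N X.
Proof.
case=> F matching_F; split; first exact: indep_lpart_matched matching_F.
rewrite /nullity /corank (mrank_indep (indep_lpart_matched matching_F)) -card_K.
have := indep_card_le_mrank (subsetDl _ _) (indep_rpart_matched_outside_K matching_F).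
rewrite cardsD (setIidPr (rpart_matched_into_K X F)).
move: (card_matched_into_K matching_F) (card_lpart_rpart (matched_into_K X F)).
rewrite (lpart_matched_into_K matching_F); lia.
Qed.

End FreeProduct.

Theorem proposition4p13 (S T : finType) (M : matroid S) (N : matroid T) :
  transversal_matroid M -> transversal_matroid N ->
  transversal_indep (free_product_indep M N).
Proof.
move=> [IM [AM presM]] [IN [AN presN]].
have [B [_ indepB card_B]] := mrank_basis M [set: S].
have [fB matching_B] := (presM B).1 indepB.
have max_B A g : matching AM A g -> #|A| <= #|B|.
  by move=> matching_A; rewrite card_B indep_card_le_mrank ?subsetT //; apply/presM; exists g.
have card_K : #|fB @: B| = mrk M by rewrite card_in_imset //; case: matching_B.
have indep_into_K P : indep M P -> exists2 g, matching AM P g & {in P, forall x, g x \in fB @: B}.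
  by case/presM=> g0; apply: matching_into_max_indices.
exists (IM + IN)%type, (free_product_family AM AN (fB @: B)) => X; split.
  exact: free_product_indep_transversal.
exact: transversal_free_product_indep.
Qed.
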